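(* Let $V_1,\dots,V_n$ be vector spaces over a field $K$, let $L_k:V_k\to V_{k+1}$ ($k\in[n-1]$) be linear maps and $\sigma_k:V_{k+1}\to V_{k+1}$ arbitrary maps, and let $f=\sigma_{n-1}\circ L_{n-1}\circ\cdots\circ\sigma_1\circ L_1:V_1\to V_n$. Then $f$ is linearly equivariant if and only if the following holds: for any maps $t_k\in\mathrm{End}(\mathrm{set}(V_k))$, $k\in[n]$, if $t_{k+1}\circ L_k=L_k\circ t_k$ for all $k\in[n-1]$, then $t_n\circ f=f\circ t_1$.
   Context: $\mathrm{End}(\mathrm{set}(V))$ denotes the monoid of all (not necessarily linear) maps $V\to V$. The network $f$ is linearly equivariant if for every semigroup $S$ and every family of semigroup actions $\alpha_{V_k}:S\to\mathrm{End}(\mathrm{set}(V_k))$, $k\in[n]$ (forming coupled actions $(\alpha_{V_k},\alpha_{V_{k+1}})$): whenever $\alpha_{V_{k+1}}(s)\circ L_k=L_k\circ\alpha_{V_k}(s)$ for all $k\in[n-1]$ and $s\in S$, it follows that $\alpha_{V_n}(s)\circ f=f\circ\alpha_{V_1}(s)$ for all $s\in S$. *)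

From HB Require Import structures.
From mathcomp Require Import all_boot all_order all_algebra.
Set Implicit Arguments. Unset Strict Implicit. Unset Printing Implicit Defensive.
Import GRing.Theory.
Local Open Scope ring_scope.

(* Indexing convention (0-based): the paper's V_1,...,V_n are V 0,...,V m
   with m = n-1; the paper's L_k : V_k -> V_{k+1} is L (k-1) : V (k-1) -> V k,
   and sigma_k acts on V_{k+1}, i.e. sigma (k-1) : V k -> V k. *)

Fixpoint net (K : fieldType) (V : nat -> lmodType K)
    (L : forall k, {linear V k -> V k.+1})
    (sigma : forall k, V k.+1 -> V k.+1) (j : nat) : V 0 -> V j :=
  match j as j0 return V 0 -> V j0 with
  | 0 => fun x => x
  | j'.+1 => fun x => sigma j' (L j' (net L sigma j' x))
  end.

Definition semigroup_action (S : Type) (op : S -> S -> S) (X : Type)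
    (alpha : S -> X -> X) : Prop :=
  forall s t x, alpha (op s t) x = alpha s (alpha t x).

Definition linearly_equivariant (K : fieldType) (V : nat -> lmodType K)
    (L : forall k, {linear V k -> V k.+1}) (m : nat) (f : V 0 -> V m) : Prop :=
  forall (S : Type) (op : S -> S -> S), associative op ->
  forall alpha : forall k, S -> V k -> V k,
    (forall k, (k <= m)%N -> semigroup_action op (alpha k)) ->
    (forall k, (k < m)%N -> forall s x, alpha k.+1 s (L k x) = L k (alpha k s x)) ->
    forall s x, alpha m s (f x) = f (alpha 0 s x).

From HB Require Import structures.
From mathcomp Require Import all_boot all_order all_algebra.

(* Neither the layered form of the network nor the linearity of the layers
   matters: for any f, a family of maps t_k intertwining the L_k generates the
   action n |-> t_k^n of the semigroup (nat, +), which still intertwines the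
   L_k, and the element n = 1 gives back t_k; conversely, each element s of a semigroup action yields such a family
   t_k := alpha_k s. *)

Lemma iter_semigroup_action (X : Type) (t : X -> X) :
  semigroup_action addn (fun n => iter n t).
Proof. by move=> a b x; rewrite iterD. Qed.

Lemma iter_intertwine (A B : Type) (h : A -> B) (t : A -> A) (u : B -> B) :
  (forall x, u (h x) = h (t x)) -> forall n x, iter n u (h x) = h (iter n t x).
Proof. by move=> htu; elim=> [|n IHn] x //=; rewrite IHn htu. Qed.

Lemma linearly_equivariantP (K : fieldType) (V : nat -> lmodType K)
    (L : forall k, {linear V k -> V k.+1}) (m : nat) (f : V 0 -> V m) :
  linearly_equivariant L f <->
  (forall t : forall k, V k -> V k,
     (forall k, (k < m)%N -> forall x, t k.+1 (L k x) = L k (t k x)) ->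
     forall x, t m (f x) = f (t 0 x)).
Proof.
split=> [equiv_f t tL x | intertw_f S op _ alpha _ alphaL s x].
- apply: (equiv_f nat addn addnA (fun k n => iter n (t k)) _ _ 1%N x).
  + by move=> k _; apply: iter_semigroup_action.
  + by move=> k lt_km; apply: iter_intertwine; apply: tL.
- exact: (intertw_f (fun k => alpha k s) (fun k lt_km => alphaL k lt_km s)).
Qed.

Theorem lemma4p3 (K : fieldType) (m : nat) (V : nat -> lmodType K)
    (L : forall k, {linear V k -> V k.+1})
    (sigma : forall k, V k.+1 -> V k.+1) :
  linearly_equivariant L (net L sigma m) <->
  (forall t : forall k, V k -> V k,
     (forall k, (k < m)%N -> forall x, t k.+1 (L k x) = L k (t k x)) ->
     forall x, t m (net L sigma m x) = net L sigma m (t 0 x)).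
Proof. exact: linearly_equivariantP. Qed.
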